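(* Let $\mathcal{Y}$ be a finite nonempty set, $p,q$ probability distributions on $\mathcal{Y}$ with full support and $q$ not constant. Let $\Delta\ge0$ be such that there exists $\alpha\ge 0$ with $D_{\mathrm{KL}}(T(q,p,\alpha)\|p)=\Delta$; denote this (unique) $\alpha$ by $\alpha(\Delta)$ and let $\phi_\Delta=T(q,p,\alpha(\Delta))$. Let $\epsilon\in\mathbb{R}$ and let $\psi$ be a probability distribution on $\mathcal{Y}$ such that $$D_{\mathrm{KL}}(\psi\|p)\le\Delta\quad\text{and}\quad H(\psi\|q)\le H(\phi_\Delta\|q)+\epsilon.$$ Then $D_{\mathrm{KL}}(\psi\,\|\,\phi_\Delta)\le \alpha(\Delta)\,\epsilon$.
   Context: For distributions $a,b$ on a finite set, $H(a\|b)=\sum_y a(y)\log\frac{1}{b(y)}$ (cross entropy) and $D_{\mathrm{KL}}(a\|b)=\sum_y a(y)\log\frac{a(y)}{b(y)}$ (natural logarithms). The mismatched tilt is, for $\alpha\in\mathbb{R}$, $T(q,p,\alpha)(y)=\frac{p(y)q(y)^{\alpha}}{\sum_{z}p(z)q(z)^\alpha}$. (The distribution $\phi_\Delta$ is the optimal solution of minimizing $H(\phi\|q)$ subject to $D_{\mathrm{KL}}(\phi\|p)\le\Delta$.) *)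

From HB Require Import structures.
From mathcomp Require Import all_boot all_order all_algebra.
From mathcomp Require Import all_classical all_reals all_analysis.
Set Implicit Arguments. Unset Strict Implicit. Unset Printing Implicit Defensive.
Import Order.TTheory GRing.Theory Num.Theory.
Local Open Scope ring_scope.

Section Defs.
Context {R : realType} {Y : finType}.

Definition is_distr (a : Y -> R) : Prop :=
  (forall y, 0 <= a y) /\ \sum_(y : Y) a y = 1.

Definition full_support (a : Y -> R) : Prop := forall y, 0 < a y.

Definition cross_entropy (a b : Y -> R) : R :=
  \sum_(y : Y) a y * ln (b y)^-1.

(* KL divergence D(a||b) = sum_y a(y) log (a(y)/b(y)); with mathcomp's
   ln 0 = 0, terms with a(y) = 0 vanish (0 log 0 = 0 convention). *)
Definition KL (a b : Y -> R) : R :=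
  \sum_(y : Y) a y * ln (a y / b y).

Definition tilt (q p : Y -> R) (alpha : R) : Y -> R :=
  fun y => p y * q y `^ alpha / \sum_(z : Y) p z * q z `^ alpha.

End Defs.

From HB Require Import structures.
From mathcomp Require Import all_boot all_order all_algebra.
From mathcomp Require Import all_classical all_reals all_analysis.
From mathcomp Require Import ring lra.
Import Order.TTheory GRing.Theory Num.Theory.
Local Open Scope ring_scope.

(* With Z the normalizer of the tilt phi = T(q,p,alpha), one has
   ln (phi / p) = alpha ln q - ln Z pointwise, so for every distribution psi
   D(psi||phi) = D(psi||p) + alpha H(psi||q) + ln Z.
   Taking psi = phi eliminates ln Z, and
   D(psi||phi) = (D(psi||p) - D(phi||p)) + alpha (H(psi||q) - H(phi||q)),
   where the first bracket is <= 0 and the second is <= eps. *)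

Lemma KL_xx (R : realType) (Y : finType) (a : Y -> R) : KL a a = 0.
Proof.
rewrite /KL big1 // => y _.
have [->|ay] := eqVneq (a y) 0; first by rewrite mul0r.
by rewrite divff // ln1 mulr0.
Qed.

Section Tilt.
Variables (R : realType) (Y : finType) (p q : Y -> R) (alpha : R).
Hypotheses (Y_gt0 : (0 < #|Y|)%N) (p_gt0 : full_support p)
  (q_gt0 : full_support q).

Let Z := \sum_(z : Y) p z * q z `^ alpha.

Lemma tilt_normalizer_gt0 : 0 < Z.
Proof.
case/card_gt0P: Y_gt0 => y0 _.
rewrite /Z (bigD1 y0) //= ltr_pwDl ?mulr_gt0 ?powR_gt0 //.
by apply: sumr_ge0 => i _; rewrite mulr_ge0 ?powR_ge0 // ltW.
Qed.

Lemma tilt_distr : is_distr (tilt q p alpha).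
Proof.
have Z_gt0 := tilt_normalizer_gt0.
split=> [y|]; first by rewrite /tilt divr_ge0 ?mulr_ge0 ?powR_ge0 // ltW.
by rewrite /tilt -mulr_suml -/Z divff // gt_eqF.
Qed.

Lemma KL_tilt (a : Y -> R) : is_distr a ->
  KL a (tilt q p alpha) = KL a p + alpha * cross_entropy a q + ln Z.
Proof.
move=> [a_ge0 a_sum1]; have Z_gt0 := tilt_normalizer_gt0.
rewrite /KL /cross_entropy mulr_sumr -big_split /=.
rewrite -[ln Z]mul1r -a_sum1 mulr_suml -big_split /=.
apply: eq_bigr => y _.
have [->|ay] := eqVneq (a y) 0; first by rewrite !mul0r !mulr0 !addr0.
have ay_gt0 : 0 < a y by rewrite lt_def ay a_ge0.
have qa_gt0 : 0 < q y `^ alpha by rewrite powR_gt0.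
have py := p_gt0 y; have qy := q_gt0 y.
rewrite /tilt !ln_div ?posrE ?divr_gt0 ?mulr_gt0 //.
rewrite lnM ?posrE // ln_powR lnV ?posrE //.
ring.
Qed.

Lemma KL_tilt_shift (psi : Y -> R) : is_distr psi ->
  KL psi (tilt q p alpha) = KL psi p - KL (tilt q p alpha) p
    + alpha * (cross_entropy psi q - cross_entropy (tilt q p alpha) q).
Proof.
move=> psi_distr.
have := @KL_tilt _ tilt_distr; rewrite KL_xx => KL_phi.
rewrite KL_tilt //.
have -> : ln Z = - KL (tilt q p alpha) p
                 - alpha * cross_entropy (tilt q p alpha) q by lra.
ring.
Qed.

End Tilt.

Theorem mainTheorem2 (R : realType) (Y : finType) (p q : Y -> R)
  (Delta alpha eps : R) (psi : Y -> R) :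
  (0 < #|Y|)%N ->
  is_distr p -> full_support p ->
  is_distr q -> full_support q ->
  (exists y1 y2 : Y, q y1 != q y2) ->
  0 <= Delta ->
  0 <= alpha ->
  KL (tilt q p alpha) p = Delta ->
  is_distr psi ->
  KL psi p <= Delta ->
  cross_entropy psi q <= cross_entropy (tilt q p alpha) q + eps ->
  KL psi (tilt q p alpha) <= alpha * eps.
Proof.
move=> Y_gt0 _ p_gt0 _ q_gt0 _ _ alpha_ge0 KL_phi psi_distr KL_psi H_psi.
rewrite KL_tilt_shift // KL_phi.
have : alpha * (cross_entropy psi q - cross_entropy (tilt q p alpha) q)
       <= alpha * eps by rewrite ler_wpM2l //; lra.
lra.
Qed.
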